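(* Let $R$ be a type $(1,1)$ tensor on $E$ with $R(dt)=0$ and $\widetilde{R}$ its complete lift to $J^1\tau^*$. The adjoint action of $\widetilde{R}$ on 1-forms on $J^1\tau^*$ is fully determined by $\widetilde{R}(\pi^*\alpha)=\pi^*(R(\alpha))$ for all 1-forms $\alpha$ on $E$, and $\widetilde{R}(dF_X)=dF_{R(X)}-(\mathcal{L}_XR)^h$ for all $X\in\mathcal{X}^V(E)$.
   Context: Setting: $\tau:E\to\mathbb{R}$, $\dim E=n+1$, adapted coordinates $(t,q^i)$, allowed changes $t\mapsto t$, $q\mapsto Q(t,q)$; $J^1\tau^*=T^*E/\langle dt\rangle$, projection $\pi:J^1\tau^*\to E$, coordinates $(t,q^i,p_i)$ (class of $p_idq^i$). $\mathcal{X}^V(E)$: vector fields with $\langle X,dt\rangle=0$. $(1,1)$ tensors act on 1-forms by $\langle R(X),\alpha\rangle=\langle X,R(\alpha)\rangle$; locally $R=R^i_j\partial_{q^i}\otimes dq^j+R^i_0\partial_{q^i}\otimes dt$. For $X=X^i\partial_{q^i}\in\mathcal{X}^V(E)$: $F_X=p_iX^i$ (i.e. $F_X(m)=\langle X_{\pi(m)},m\rangle$). Horizontal lift of a $(1,1)$ tensor $S$ on $E$ with $S(dt)=0$: the 1-form $S^h$ on $J^1\tau^*$ with $S^h_m=S_{\pi(m)}(m)$, in coordinates $S^h=p_iS^i_jdq^j+p_iS^i_0dt$. (Note $(\mathcal{L}_XR)(dt)=0$ for vertical $X$.) Complete lift $\widetilde{R}$: in coordinates $\widetilde{R}=R^i_j(\partial_{q^i}\otimes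 dq^j+\partial_{p_j}\otimes dp_i)+R^i_0\partial_{q^i}\otimes dt+p_i(\frac{\partial R^i_j}{\partial q^k}-\frac{\partial R^i_k}{\partial q^j})\partial_{p_j}\otimes dq^k+p_i(\frac{\partial R^i_k}{\partial t}-\frac{\partial R^i_0}{\partial q^k})\partial_{p_k}\otimes dt$. *)

(* Local-coordinate model of tau : E -> R
   on an adapted chart: points of E are rows x : 'rV[R]_(n.+1), coordinate
   index ord0 is t, index (lift ord0 i) is q^i.  Points of J^1 tau^* are pairs
   (x, p) with p : 'rV[R]_n the fibre coordinates p_i. *)
From HB Require Import structures.
From mathcomp Require Import all_boot all_order all_algebra.
From mathcomp Require Import all_classical all_reals all_analysis.
Set Implicit Arguments. Unset Strict Implicit. Unset Printing Implicit Defensive.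
Import Order.TTheory GRing.Theory Num.Theory.
Import numFieldNormedType.Exports.
Local Open Scope classical_set_scope.
Local Open Scope ring_scope.

Section Defs.
Variables (R : realType) (n : nat).

Notation ptE := (matrix R 1 n.+1) (only parsing).
Notation ptJ := (matrix R 1 n.+1 * matrix R 1 n)%type (only parsing).
Definition Eidx := 'I_(n.+1).
Definition Jidx := ('I_(n.+1) + 'I_n)%type. (* inl a = x^a, inr i = p_i   *)
Definition tE : Eidx := ord0.
Definition qE (i : 'I_n) : Eidx := lift ord0 i.

(* fields on E: functions, vector fields (components X^a), 1-forms (alpha_a),
   (1,1) tensors (T a b = coefficient of d/dx^a (x) dx^b) *)
Definition funE := ptE -> R.
Definition vfE := Eidx -> funE.
Definition formE := Eidx -> funE.
Definition tensorE := Eidx -> Eidx -> funE.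
Definition funJ := ptJ -> R.
Definition formJ := Jidx -> funJ.
Definition tensorJ := Jidx -> Jidx -> funJ.

Definition partialE (a : Eidx) (f : funE) (x : ptE) : R :=
  derive1 (fun s : R => f (x + s *: delta_mx 0 a)) 0.
Definition partialJ (b : Jidx) (F : funJ) (m : ptJ) : R :=
  match b with
  | inl a => derive1 (fun s : R => F (m.1 + s *: delta_mx 0 a, m.2)) 0
  | inr i => derive1 (fun s : R => F (m.1, m.2 + s *: delta_mx 0 i)) 0
  end.
Definition dJ (F : funJ) : formJ := fun b m => partialJ b F m.

Fixpoint smooth_on_k (k : nat) (U : set ptE) (f : funE) : Prop :=
  match k with
  | 0 => forall x, U x -> differentiable f x
  | k.+1 => (forall x, U x -> differentiable f x) /\
            forall a, smooth_on_k k U (partialE a f)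
  end.
Definition smooth_on (U : set ptE) (f : funE) := forall k, smooth_on_k k U f.

Definition pairE (X : vfE) (al : formE) (x : ptE) : R :=
  \sum_(a < n.+1) X a x * al a x.
Definition dtE : formE := fun a _ => if a == tE then 1 else 0.
Definition vertical_on (U : set ptE) (X : vfE) :=
  forall x, U x -> pairE X dtE x = 0.
(* action on 1-forms: <X, T(alpha)> = <T(X), alpha> *)
Definition actE (T : tensorE) (al : formE) : formE :=
  fun b x => \sum_(a < n.+1) al a x * T a b x.
Definition actV (T : tensorE) (X : vfE) : vfE :=
  fun a x => \sum_(b < n.+1) T a b x * X b x.
Definition actJ (S : tensorJ) (be : formJ) : formJ :=
  fun b m => \sum_(a : Jidx) be a m * S a b m.

(* Lie bracket, and Lie derivative of a (1,1) tensor: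
   (L_X T)(Y) = [X, T Y] - T [X, Y], components via coordinate fields *)
Definition coordVF (b : Eidx) : vfE := fun a _ => if a == b then 1 else 0.
Definition bracket (X Y : vfE) : vfE :=
  fun a x => \sum_(c < n.+1)
     (X c x * partialE c (Y a) x - Y c x * partialE c (X a) x).
Definition LieT (X : vfE) (T : tensorE) : tensorE :=
  fun a b x => bracket X (actV T (coordVF b)) a x
             - actV T (bracket X (coordVF b)) a x.

(* the covector on E represented by m in J^1 tau^* (class of p_i dq^i) *)
Definition covE (m : ptJ) : Eidx -> R :=
  fun a => match unlift ord0 a with Some i => m.2 0 i | None => 0 end.

(* F_X(m) = < X_{pi(m)}, m > *)
Definition F (X : vfE) : funJ :=
  fun m => \sum_(a < n.+1) X a m.1 * covE m a.

Definition pullJ (al : formE) : formJ :=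
  fun b m => match b with inl a => al a m.1 | inr _ => 0 end.

(* horizontal lift: S^h_m = S_{pi(m)}(m), as a 1-form on J^1 tau^* *)
Definition hlift (S : tensorE) : formJ :=
  fun b m => match b with
             | inl b' => \sum_(a < n.+1) covE m a * S a b' m.1
             | inr _ => 0 end.

(* complete lift, by its coordinate expression *)
Definition clift (T : tensorE) : tensorJ :=
  fun a b m =>
  let x := m.1 in let p := fun i => m.2 0 i in
  match a, b with
  | inl a', inl b' =>      (* R^i_j d_{q^i} (x) dq^j  and  R^i_0 d_{q^i} (x) dt *)
      if unlift ord0 a' is Some _ then T a' b' x else 0
  | inr j, inr i => T (qE i) (qE j) x   (* R^i_j d_{p_j} (x) dp_i *)
  | inr j, inl b' =>
      match unlift ord0 b' with
      | Some k =>   (* p_i (d_k R^i_j - d_j R^i_k) d_{p_j} (x) dq^k *)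
          \sum_(i < n) p i * (partialE (qE k) (T (qE i) (qE j)) x
                              - partialE (qE j) (T (qE i) (qE k)) x)
      | None =>     (* p_i (d_t R^i_j - d_j R^i_0) d_{p_j} (x) dt *)
          \sum_(i < n) p i * (partialE tE (T (qE i) (qE j)) x
                              - partialE (qE j) (T (qE i) tE) x)
      end
  | inl _, inr _ => 0
  end.

End Defs.

(* The pullback identity only involves the dx-block of the complete lift, which is
   R itself since R(dt) = 0 kills the t-row of R. For
   dF_X = (d_a X^i) p_i dx^a + X^i dp_i, contracting with the complete lift and
   expanding dF_{R(X)} by the Leibniz rule, the terms p_i R^i_c d_b X^c cancel
   against the last term of (L_X R)^h, and the remaining terms match once X^t = 0
   and R^t_b = 0 are used to let all sums run over every coordinate.
   Uniqueness: the forms pi^* dx^a and dF_{d/dq^j} = dp_j form a coframe, and the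
   coordinate fields d/dq^j are smooth and vertical. *)
From HB Require Import structures.
From mathcomp Require Import all_boot all_order all_algebra.
From mathcomp Require Import all_classical all_reals all_analysis.
From mathcomp Require Import ring.
Import Order.TTheory GRing.Theory Num.Theory.
Import numFieldNormedType.Exports.
Local Open Scope classical_set_scope.
Local Open Scope ring_scope.

Lemma sum_ord_lift0 (K : nmodType) k (f : 'I_k.+1 -> K) :
  f ord0 = 0 -> \sum_(a < k.+1) f a = \sum_(j < k) f (lift ord0 j).
Proof. by move=> f0; rewrite big_ord_recl f0 add0r. Qed.

(* With p c = p_c, X d = X^d, DX a c = d_a X^c, T c d = R^c_d and
   DT a c d = d_a R^c_d, this is the x-component of the second identity. *)
Lemma lie_coordinate_identity (K : comRingType) (I : finType)
    (p X : I -> K) (DX T : I -> I -> K) (DT : I -> I -> I -> K) b :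
  \sum_a (\sum_c DX a c * p c) * T a b
    + \sum_d X d * \sum_c p c * (DT b c d - DT d c b)
  = \sum_c (\sum_d (DT b c d * X d + T c d * DX b d)) * p c
    - \sum_c p c * (\sum_d (X d * DT d c b - T d b * DX d c)
                    + \sum_d T c d * DX b d).
Proof.
under eq_bigr do rewrite big_distrl.
rewrite exchange_big.
under [X in _ + X]eq_bigr do rewrite big_distrr.
rewrite [X in _ + X]exchange_big -big_split -sumrB.
apply: eq_bigr => c _.
rewrite mulrDr !big_distrl !big_distrr -!big_split -sumrB /=.
apply: eq_bigr => d _; ring.
Qed.

Lemma derivable_sum_mul (R : realType) (V : normedModType R) k
    (g h : 'I_k -> V -> R) x v :
  (forall j, derivable (g j) x v) -> (forall j, derivable (h j) x v) ->
  derivable (fun y => \sum_(j < k) g j y * h j y) x v.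
Proof.
move=> dg dh; rewrite -fct_sumE.
by apply: derivable_sum => j; apply: derivableM.
Qed.

Lemma derive_sum_mul (R : realType) (V : normedModType R) k
    (g h : 'I_k -> V -> R) x v :
  (forall j, derivable (g j) x v) -> (forall j, derivable (h j) x v) ->
  'D_v (fun y => \sum_(j < k) g j y * h j y) x
    = \sum_(j < k) ('D_v (g j) x * h j x + g j x * 'D_v (h j) x).
Proof.
move=> dg dh; rewrite -fct_sumE derive_sum => [|j]; last exact: derivableM.
by apply: eq_bigr => j _; rewrite deriveM // addrC mulrC.
Qed.

Section Coordinates.
Variables (R : realType) (n : nat).
Implicit Types (m : 'rV[R]_(n.+1) * 'rV[R]_n) (x : 'rV[R]_(n.+1)).
Implicit Types (X : vfE R n) (T : tensorE R n).

Lemma partialE_D (a : Eidx n) (f : funE R n) x :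
  partialE a f x = 'D_(delta_mx 0 a) f x.
Proof.
rewrite /partialE derive1E /derive.
do 2 f_equal; apply/funext => h /=.
by rewrite /shift /= scale0r !addr0 [_ + x]addrC -[h%:A]/(h * 1) mulr1.
Qed.

Lemma sum_mul_coordVF (f : Eidx n -> R) c x :
  \sum_a f a * @coordVF R n c a x = f c.
Proof.
rewrite (bigD1 c) //= /coordVF eqxx mulr1 big1 ?addr0 // => a /negbTE ->.
exact: mulr0.
Qed.

Lemma sum_coordVF_mul (f : Eidx n -> R) c x :
  \sum_a @coordVF R n c a x * f a = f c.
Proof. by rewrite -(sum_mul_coordVF f c x); apply: eq_bigr => a _; rewrite mulrC. Qed.

Lemma pairE_dtE X x : pairE X (@dtE R n) x = X (tE n) x.
Proof. exact: sum_mul_coordVF. Qed.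

Lemma actE_dtE T b x : actE T (@dtE R n) b x = T (tE n) b x.
Proof. exact: sum_coordVF_mul. Qed.

Lemma covE_t m : covE m (tE n) = 0.
Proof. by rewrite /covE unlift_none. Qed.

Lemma covE_q m j : covE m (qE j) = m.2 0 j.
Proof. by rewrite /covE liftK. Qed.

Lemma covE_shift x (p : 'rV[R]_n) s i a :
  covE (x, p + s *: delta_mx 0 i) a = covE (x, p) a + s * @coordVF R n (qE i) a x.
Proof.
rewrite /covE /qE; case: unliftP => [j ->|->] /=.
  rewrite !mxE /coordVF (inj_eq lift_inj) eqxx /=.
  by case: eqP; rewrite ?mulr1 ?mulr0.
by rewrite /coordVF (negbTE (neq_lift _ _)) mulr0 addr0.
Qed.

Lemma F_shift_inr X x (p : 'rV[R]_n) s i :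
  F X (x, p + s *: delta_mx 0 i) = F X (x, p) + s * X (qE i) x.
Proof.
rewrite /F; under eq_bigr do rewrite covE_shift mulrDr mulrCA.
by rewrite big_split /= -mulr_sumr sum_mul_coordVF.
Qed.

Lemma dJ_F_inr X i m : dJ (F X) (inr i) m = X (qE i) m.1.
Proof.
case: m => x p; rewrite /dJ /partialJ /=.
under eq_fun do rewrite F_shift_inr.
rewrite derive1E deriveD // derive_cst add0r deriveM // derive_id derive_cst.
by rewrite scaler0 add0r /GRing.scale /= mulr1.
Qed.

Lemma dJ_F_inl X b m : (forall a, derivable (X a) m.1 (delta_mx 0 b)) ->
  dJ (F X) (inl b) m = \sum_a partialE b (X a) m.1 * covE m a.
Proof.
case: m => x p /= dX.
change (partialE b (fun y => \sum_a X a y * covE (x, p) a) x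
  = \sum_a partialE b (X a) x * covE (x, p) a).
rewrite partialE_D derive_sum_mul //.
by apply: eq_bigr => a _; rewrite derive_cst mulr0 addr0 partialE_D.
Qed.

Lemma partialE_actV T X c b x :
  (forall d, derivable (T c d) x (delta_mx 0 b)) ->
  (forall d, derivable (X d) x (delta_mx 0 b)) ->
  partialE b (actV T X c) x
    = \sum_d (partialE b (T c d) x * X d x + T c d x * partialE b (X d) x).
Proof.
move=> dT dX; rewrite partialE_D derive_sum_mul //.
by apply: eq_bigr => d _; rewrite !partialE_D.
Qed.

Lemma actV_coordVF T b : actV T (coordVF b) = fun a => T a b.
Proof. by apply/funext => a; apply/funext => x; rewrite /actV sum_mul_coordVF. Qed.

Lemma bracket_coordVF X b c x :
  bracket X (coordVF b) c x = - partialE b (X c) x.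
Proof.
rewrite /bracket; under eq_bigr do rewrite partialE_D derive_cst mulr0 sub0r.
by rewrite sumrN sum_coordVF_mul.
Qed.

Lemma LieT_E X T a b x :
  LieT X T a b x
    = \sum_c (X c x * partialE c (T a b) x - T c b x * partialE c (X a) x)
      + \sum_c T a c x * partialE b (X c) x.
Proof.
rewrite /LieT actV_coordVF; congr (_ + _).
by rewrite /actV -sumrN; apply: eq_bigr => c _; rewrite bracket_coordVF mulrN opprK.
Qed.

Lemma actJ_split (S : tensorJ R n) (be : formJ R n) b m :
  actJ S be b m = \sum_a be (inl a) m * S (inl a) b m
                  + \sum_j be (inr j) m * S (inr j) b m.
Proof. by rewrite /actJ big_sumType. Qed.

Lemma clift_inl_inl T a b m :
  T (tE n) b m.1 = 0 -> clift T (inl a) (inl b) m = T a b m.1.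
Proof. by move=> T0; rewrite /clift; case: unliftP => [j ->|->]. Qed.

Lemma clift_inr_inl T j b m :
  clift T (inr j) (inl b) m
    = \sum_c covE m c * (partialE b (T c (qE j)) m.1
                         - partialE (qE j) (T c b) m.1).
Proof.
rewrite sum_ord_lift0 ?covE_t ?mul0r //.
by rewrite /clift; case: unliftP => [k|] ->; apply: eq_bigr => i _; rewrite covE_q.
Qed.

Lemma actJ_clift_pullJ T (al : formE R n) b m :
  (forall b, T (tE n) b m.1 = 0) ->
  actJ (clift T) (pullJ al) b m = pullJ (actE T al) b m.
Proof.
move=> T0; rewrite actJ_split [X in _ + X]big1 ?addr0 => [|j _]; last first.
  exact: mul0r.
case: b => [b|i]; first by apply: eq_bigr => a _; rewrite clift_inl_inl.
by rewrite big1 // => a _; apply: mulr0.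
Qed.

Lemma actJ_clift_dF T X b m :
  (forall b, T (tE n) b m.1 = 0) -> X (tE n) m.1 = 0 ->
  (forall a c k, derivable (T a c) m.1 (delta_mx 0 k)) ->
  (forall a k, derivable (X a) m.1 (delta_mx 0 k)) ->
  actJ (clift T) (dJ (F X)) b m = dJ (F (actV T X)) b m - hlift (LieT X T) b m.
Proof.
move=> T0 X0 dT dX; rewrite actJ_split.
under [X in _ + X]eq_bigr do rewrite dJ_F_inr.
case: b => [b|i].
  under [X in X + _]eq_bigr do rewrite dJ_F_inl // clift_inl_inl //.
  under [X in _ + X]eq_bigr do rewrite clift_inr_inl.
  rewrite [X in _ + X](_ : _ = \sum_d X d m.1 * \sum_c covE m c *
             (partialE b (T c d) m.1 - partialE d (T c b) m.1)); last first.
    by rewrite sum_ord_lift0 // X0 mul0r.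
  rewrite dJ_F_inl => [|c]; last exact: derivable_sum_mul.
  under [X in _ = X - _]eq_bigr do rewrite partialE_actV //.
  rewrite /hlift; under [X in _ - X]eq_bigr do rewrite LieT_E.
  exact: (@lie_coordinate_identity _ _ (covE m) (X^~ m.1)
           (fun a c => partialE a (X c) m.1) (fun c d => T c d m.1)
           (fun a c d => partialE a (T c d) m.1)).
rewrite big1 => [|a _]; last exact: mulr0.
rewrite dJ_F_inr /hlift subr0 add0r /actV sum_ord_lift0 ?X0 ?mulr0 //.
by apply: eq_bigr => j _; rewrite mulrC.
Qed.

Lemma actJ_pullJ_coordVF (S : tensorJ R n) c b m :
  actJ S (pullJ (coordVF c)) b m = S (inl c) b m.
Proof.
rewrite actJ_split [X in _ + X]big1 ?addr0 => [|j _]; last exact: mul0r.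
exact: sum_coordVF_mul.
Qed.

Lemma actJ_dF_coordVF (S : tensorJ R n) j b m :
  actJ S (dJ (F (@coordVF R n (qE j)))) b m = S (inr j) b m.
Proof.
rewrite actJ_split big1 ?add0r => [|a _]; last first.
  rewrite dJ_F_inl => [|c]; last exact: derivable_cst.
  by rewrite big1 ?mul0r // => c _; rewrite partialE_D derive_cst mul0r.
under eq_bigr do rewrite dJ_F_inr.
rewrite (bigD1 j) //= /coordVF eqxx mul1r big1 ?addr0 // => i.
by rewrite (inj_eq lift_inj) => /negbTE ->; rewrite mul0r.
Qed.

Lemma smooth_on_cst (U : set 'rV[R]_(n.+1)) (c : R) : smooth_on U (fun _ => c).
Proof.
move=> k; elim: k c => [|k IH] c; first by move=> x _; apply: differentiable_cst.
split=> [x _|a]; first exact: differentiable_cst.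
have -> : partialE a (fun _ : 'rV[R]_(n.+1) => c) = (fun _ => 0).
  by apply/funext => x; rewrite partialE_D derive_cst.
exact: IH.
Qed.

Lemma vertical_on_coordVF (U : set 'rV[R]_(n.+1)) j :
  vertical_on U (@coordVF R n (qE j)).
Proof.
by move=> x _; rewrite pairE_dtE /coordVF /qE /tE (negbTE (neq_lift _ _)).
Qed.

End Coordinates.

Theorem proposition3 (R : realType) (n : nat) (U : set 'rV[R]_(n.+1))
  (T : tensorE R n) :
  open U ->
  (forall a b, smooth_on U (T a b)) ->
  (forall b x, U x -> actE T (@dtE R n) b x = 0) ->
  [/\ (forall (al : formE R n) b (m : 'rV[R]_(n.+1) * 'rV[R]_n), U m.1 ->
         actJ (clift T) (pullJ al) b m = pullJ (actE T al) b m),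
      (forall X : vfE R n, (forall a, smooth_on U (X a)) -> vertical_on U X ->
         forall b (m : 'rV[R]_(n.+1) * 'rV[R]_n), U m.1 ->
         actJ (clift T) (dJ (F X)) b m
           = dJ (F (actV T X)) b m - hlift (LieT X T) b m)
    & (forall S : tensorJ R n,
         (forall (al : formE R n) b (m : 'rV[R]_(n.+1) * 'rV[R]_n), U m.1 ->
            actJ S (pullJ al) b m = pullJ (actE T al) b m) ->
         (forall X : vfE R n, (forall a, smooth_on U (X a)) -> vertical_on U X ->
            forall b (m : 'rV[R]_(n.+1) * 'rV[R]_n), U m.1 ->
            actJ S (dJ (F X)) b m
              = dJ (F (actV T X)) b m - hlift (LieT X T) b m) ->
         forall (be : formJ R n) b (m : 'rV[R]_(n.+1) * 'rV[R]_n), U m.1 ->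
           actJ S be b m = actJ (clift T) be b m)].
Proof.
move=> _ smoothT Rdt.
have T0 b x : U x -> T (tE n) b x = 0.
  by rewrite -actE_dtE; apply: Rdt.
have derivable_partial f x k : smooth_on U f -> U x -> derivable f x (delta_mx 0 k).
  by move=> sf Ux; apply/diff_derivable/(sf 0%N).
have pull_id al b m : U m.1 ->
    actJ (clift T) (pullJ al) b m = pullJ (actE T al) b m.
  by move=> Um; apply: actJ_clift_pullJ => b'; apply: T0.
have dF_id X : (forall a, smooth_on U (X a)) -> vertical_on U X ->
    forall b m, U m.1 ->
    actJ (clift T) (dJ (F X)) b m = dJ (F (actV T X)) b m - hlift (LieT X T) b m.
  move=> sX vX b m Um; apply: actJ_clift_dF => [b'|||a k]; first exact: T0.
  - by rewrite -pairE_dtE; apply: vX.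
  - by move=> a c k; apply: derivable_partial.
  - exact: derivable_partial.
split=> // S S_pull S_dF be b m Um.
apply: eq_bigr => -[c|j] _; congr (_ * _).
  by rewrite -actJ_pullJ_coordVF S_pull // -pull_id // actJ_pullJ_coordVF.
have sX a : smooth_on U (@coordVF R n (qE j) a) by apply: smooth_on_cst.
have vX := @vertical_on_coordVF R n U j.
by rewrite -actJ_dF_coordVF S_dF // -dF_id // actJ_dF_coordVF.
Qed.
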